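(* Let $r\ge 1$ be an integer and let $\mathbf{C_r}$ be the poset with ground set $[r]^3$ in which $(x_1,y_1,z_1)\le (x_2,y_2,z_2)$ if and only if $z_1\le z_2$ and ($y_1<y_2$ or ($y_1=y_2$ and $x_1=x_2$)). Then every subposet $S$ of $\mathbf{C_r}$ with $|S|\ge 4r^2$ has dimension at least $3$.
   Context: $[r]$ denotes $\{0,1,\ldots,r-1\}$. A subposet of a poset $P$ is a subset of its ground set with the order induced from $P$. The dimension of a poset $P$ is the least integer $d$ such that there are $d$ linear extensions of $P$ whose intersection is $P$. *)

From mathcomp Require Import all_boot.
Set Implicit Arguments. Unset Strict Implicit. Unset Printing Implicit Defensive.

(* Ground set [r]^3 = 'I_r * 'I_r * 'I_r, a point is ((x, y), z). *)
Definition pt (r : nat) : finType := ('I_r * 'I_r * 'I_r)%type.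

Definition Cle (r : nat) (p q : pt r) : bool :=
  let: (x1, y1, z1) := p in
  let: (x2, y2, z2) := q in
  (z1 <= z2) && ((y1 < y2) || ((y1 == y2) && (x1 == x2))).

Definition linear_order_on (T : finType) (S : {set T}) (L : rel T) : Prop :=
  (forall x, x \in S -> L x x) /\
  (forall x y, x \in S -> y \in S -> L x y -> L y x -> x = y) /\
  (forall x y z, x \in S -> y \in S -> z \in S -> L x y -> L y z -> L x z) /\
  (forall x y, x \in S -> y \in S -> L x y || L y x).

Definition linear_extension (T : finType) (le : rel T) (S : {set T}) (L : rel T)
  : Prop :=
  linear_order_on S L /\ (forall x y, x \in S -> y \in S -> le x y -> L x y).

Definition realizer (T : finType) (le : rel T) (S : {set T}) (d : nat)
  (Ls : 'I_d -> rel T) : Prop :=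
  (forall i, linear_extension le S (Ls i)) /\
  (forall x y, x \in S -> y \in S -> (le x y <-> forall i, Ls i x y)).

Definition dim_ge (T : finType) (le : rel T) (S : {set T}) (k : nat) : Prop :=
  forall d (Ls : 'I_d -> rel T), d < k -> ~ realizer le S Ls.

From mathcomp Require Import all_boot zify.
Set Implicit Arguments. Unset Strict Implicit. Unset Printing Implicit Defensive.

(* A poset of dimension at most two contains no claw: an element b above three
   pairwise incomparable a_i, each a_i below some c_i that is neither below b nor
   above another a_j.  Indeed, if a_i, a_j, a_k appear in this order in the first
   extension, then c_j is below a_i in the second one and, unless c_j = a_j, below
   a_k in the first one; either way c_j would be below b.

   Call p = (x, y, t) in S extremal if it is the highest point of its column
   (x, y, _) in S when level t of S has a point in a higher row, and the lowest
   one when level t only has points in lower rows.  Each column contains at most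
   two extremal points, and the column (0, 0) at most one, so there are fewer
   than 2r^2 of them.  Three non-extremal points in one row of level t, together
   with the witness of a higher (lower) row and points above (below) them in their
   columns, form a claw (for the dual order); so a level has at most two
   non-extremal points per row, or all its points in a single row: at most 2r.
   Hence |S| < 4r^2. *)

Lemma total_middle3 (T : Type) (L : rel T) (a : 'I_3 -> T) :
  (forall i j, L (a i) (a j) || L (a j) (a i)) ->
  exists i j k, [/\ i != j, j != k, L (a i) (a j) & L (a j) (a k)].
Proof.
move=> tot; pose i1 : 'I_3 := inord 1.
have n01 : ord0 != i1 by rewrite -val_eqE /= inordK.
have n12 : i1 != ord_max by rewrite -val_eqE /= inordK.
have n02 : ord0 != ord_max :> 'I_3 by [].
have n10 : i1 != ord0 by rewrite eq_sym.
have n21 : ord_max != i1 by rewrite eq_sym.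
have n20 : ord_max != ord0 :> 'I_3 by [].
case/orP: (tot ord0 i1) => L01; case/orP: (tot i1 ord_max) => L12.
- by exists ord0, i1, ord_max.
- by case/orP: (tot ord0 ord_max) => L02; [exists ord0, ord_max, i1 | exists ord_max, ord0, i1].
- by case/orP: (tot ord0 ord_max) => L02; [exists i1, ord0, ord_max | exists i1, ord_max, ord0].
- by exists ord_max, i1, ord0.
Qed.

Section TwoRealizers.
Variables (T : finType) (le : rel T) (S : {set T}).

Definition two_realizer (L1 L2 : rel T) : Prop :=
  [/\ linear_order_on S L1, linear_order_on S L2 &
      forall x y, x \in S -> y \in S -> le x y <-> L1 x y /\ L2 x y].

Lemma linear_order_on_flip (L : rel T) :
  linear_order_on S L -> linear_order_on S (fun x y => L y x).
Proof.
case=> refl [anti [trans tot]]; split=> //; split.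
  by move=> x y xS yS Lyx Lxy; apply: anti.
split; first by move=> x y z xS yS zS Lyx Lzy; apply: (trans z y x).
by move=> x y xS yS; rewrite orbC; apply: tot.
Qed.

Lemma realizer_two_realizer d (Ls : 'I_d -> rel T) :
  d < 3 -> {in S, reflexive le} -> {in S &, antisymmetric le} ->
  realizer le S Ls -> exists L1 L2, two_realizer L1 L2.
Proof.
case: d Ls => [|d] Ls ltd3 le_refl le_anti [Ls_ext Ls_le].
  have le_tot x y : x \in S -> y \in S -> le x y.
    by move=> xS yS; apply/(Ls_le x y xS yS) => -[].
  have le_lin : linear_order_on S le.
    split; first exact: le_refl.
    split; first by move=> x y xS yS lexy leyx; apply: le_anti; rewrite ?lexy.
    split; first by move=> x y z xS _ zS _ _; apply: le_tot.
    by move=> x y xS yS; rewrite le_tot.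
  by exists le, le; split=> // x y xS yS; split=> [lexy|[]//].
have [lin0 _] := Ls_ext ord0; have [linM _] := Ls_ext ord_max.
exists (Ls ord0), (Ls ord_max); split=> // x y xS yS.
rewrite (Ls_le x y xS yS); split=> [Lxy|[L0 LM] i]; first by split; apply: Lxy.
have [->|->] : i = ord0 \/ i = ord_max.
  by case: i => [[|m] lt_m]; [left|right]; apply: val_inj => /=; lia.
all: by [].
Qed.

Definition claw (b : T) (a c : 'I_3 -> T) : Prop :=
  [/\ forall i, le (a i) b, forall i, le (a i) (c i), forall i, ~~ le (c i) b &
      forall i j, i != j -> ~~ le (a i) (a j) && ~~ le (a i) (c j)].

Variables L1 L2 : rel T.
Hypothesis L12 : two_realizer L1 L2.

Lemma two_realizer_incomparable x y :
  x \in S -> y \in S -> ~~ le x y -> L1 x y -> L2 y x.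
Proof.
case: L12 => _ [_ [_ [_ tot2]]] le_L xS yS nlexy L1xy.
case/orP: (tot2 y x yS xS) => // L2xy.
by case/negP: nlexy; apply/le_L.
Qed.

Lemma two_realizer_claw_no_middle ai aj ak cj b :
  ai \in S -> aj \in S -> ak \in S -> cj \in S -> b \in S ->
  le ai b -> le aj b -> le ak b -> le aj cj -> ~~ le cj b ->
  ~~ le ai cj -> ~~ le ak cj -> ~~ le aj ak ->
  L1 ai aj -> L1 aj ak -> False.
Proof.
move=> aiS ajS akS cjS bS aib ajb akb ajc ncjb naic nakc najak L1ij L1jk.
case: (L12) => [[_ [_ [tr1 tot1]]] [_ [anti2 [tr2 _]]] le_L].
have L1_of x y : x \in S -> y \in S -> le x y -> L1 x y by move=> xS yS /le_L[].
have L2_of x y : x \in S -> y \in S -> le x y -> L2 x y by move=> xS yS /le_L[].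
have L1icj : L1 ai cj := tr1 _ _ _ aiS ajS cjS L1ij (L1_of _ _ ajS cjS ajc).
have L2cji : L2 cj ai := two_realizer_incomparable aiS cjS naic L1icj.
case/orP: (tot1 cj ak cjS akS) => [L1cjk | L1kcj].
  case/negP: ncjb; apply/le_L => //; split.
    exact: tr1 _ _ _ cjS akS bS L1cjk (L1_of _ _ akS bS akb).
  exact: tr2 _ _ _ cjS aiS bS L2cji (L2_of _ _ aiS bS aib).
(* otherwise [cj] lies below [aj] in [L2], hence equals it *)
have L2cjk := two_realizer_incomparable akS cjS nakc L1kcj.
have L2kj := two_realizer_incomparable ajS akS najak L1jk.
have ecj : cj = aj.
  by apply: anti2 => //; [exact: tr2 L2cjk L2kj | exact: L2_of].
by rewrite ecj ajb in ncjb.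
Qed.

Lemma two_realizer_claw_free b (a c : 'I_3 -> T) :
  b \in S -> (forall i, a i \in S) -> (forall i, c i \in S) -> ~ claw b a c.
Proof.
move=> bS aS cS [ab ac ncb inc].
have [_ [_ [_ tot1]]] : linear_order_on S L1 by case: L12.
have [i [j [k [nij njk L1ij L1jk]]]] := total_middle3 (fun i j => tot1 _ _ (aS i) (aS j)).
have /andP [_ naicj] := inc i j nij.
have /andP [najak _] := inc j k njk.
have /andP [_ nakcj] : ~~ le (a k) (a j) && ~~ le (a k) (c j) by apply: inc; rewrite eq_sym.
exact: (two_realizer_claw_no_middle (aS i) (aS j) (aS k) (cS j) bS
         (ab i) (ab j) (ab k) (ac j) (ncb j) naicj nakcj najak L1ij L1jk).
Qed.
End TwoRealizers.

Lemma two_realizer_flip (T : finType) (le : rel T) (S : {set T}) (L1 L2 : rel T) :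
  two_realizer le S L1 L2 ->
  two_realizer (fun x y => le y x) S (fun x y => L1 y x) (fun x y => L2 y x).
Proof.
case=> lin1 lin2 le_L; split; try exact: linear_order_on_flip.
by move=> x y xS yS; apply: le_L.
Qed.

Lemma card_le_fibers (T U : finType) (A : {set T}) (f : T -> U) k :
  (forall u, #|[set x in A | f x == u]| <= k) -> #|A| <= #|U| * k.
Proof.
move=> fibk; rewrite -sum1_card (partition_big f predT) //= -sum_nat_const.
apply: leq_sum => u _; rewrite sum1_card (leq_trans _ (fibk u)) //.
by apply: subset_leq_card; apply/subsetP => x; rewrite !inE.
Qed.

Definition px r (p : pt r) : 'I_r := p.1.1.
Definition py r (p : pt r) : 'I_r := p.1.2.
Definition pz r (p : pt r) : 'I_r := p.2.

Lemma CleE r (p q : pt r) : Cle p q =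
  (pz p <= pz q) && ((py p < py q) || ((py p : nat) == py q) && ((px p : nat) == px q)).
Proof. by case: p => [[? ?] ?]; case: q => [[? ?] ?]. Qed.

Lemma pt_inj r (p q : pt r) :
  (px p : nat) = px q -> (py p : nat) = py q -> (pz p : nat) = pz q -> p = q.
Proof.
by case: p q => [[? ?] ?] [[? ?] ?]; rewrite /px /py /pz /= => /val_inj-> /val_inj-> /val_inj->.
Qed.

Lemma Cle_refl r : reflexive (@Cle r).
Proof. by move=> p; rewrite CleE; lia. Qed.

Lemma Cle_anti r : antisymmetric (@Cle r).
Proof. by move=> p q /andP[]; rewrite !CleE => pq qp; apply: pt_inj; lia. Qed.

Section RowClaws.
Variables (r : nat) (a c : 'I_3 -> pt r) (b : pt r) (y : nat).
Hypotheses (a_px : forall i j, i != j -> (px (a i) : nat) != px (a j))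
           (a_row : forall i, (py (a i) : nat) = y /\ (pz (a i) : nat) = pz b).

Lemma claw_up :
  y < py b -> (forall i, (c i).1 = (a i).1 /\ pz (a i) < pz (c i)) -> claw (@Cle r) b a c.
Proof.
move=> yb ac; have cx i : px (c i) = px (a i) by rewrite /px (ac i).1.
have cy i : py (c i) = py (a i) by rewrite /py (ac i).1.
split=> [i|i|i|i j /a_px]; rewrite ?CleE ?cx ?cy.
- by have [] := a_row i; lia.
- by have [_ ] := ac i; lia.
- by have [] := a_row i; have [_] := ac i; lia.
- by have [] := a_row i; have [] := a_row j; lia.
Qed.

Lemma claw_down :
  py b < y -> (forall i, (c i).1 = (a i).1 /\ pz (c i) < pz (a i)) ->
  claw (fun p q => Cle q p) b a c.
Proof.
move=> yb ac; have cx i : px (c i) = px (a i) by rewrite /px (ac i).1.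
have cy i : py (c i) = py (a i) by rewrite /py (ac i).1.
split=> [i|i|i|i j /a_px]; rewrite ?CleE ?cx ?cy.
- by have [] := a_row i; lia.
- by have [_ ] := ac i; lia.
- by have [] := a_row i; have [_] := ac i; lia.
- by have [] := a_row i; have [] := a_row j; lia.
Qed.
End RowClaws.

Section Counting.
Variables (r : nat) (S : {set pt r}).

Definition level_above (y t : 'I_r) := [exists q in S, (pz q == t) && (y < py q)].
Definition level_below (y t : 'I_r) := [exists q in S, (pz q == t) && (py q < y)].
Definition col_top (p : pt r) := [forall q in S, (q.1 == p.1) ==> (pz q <= pz p)].
Definition col_bot (p : pt r) := [forall q in S, (q.1 == p.1) ==> (pz p <= pz q)].

Definition extremal := [set p in S | if level_above (py p) (pz p) then col_top p
                                     else level_below (py p) (pz p) && col_bot p].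

Lemma col_top_inj p q : p \in S -> q \in S -> p.1 = q.1 -> col_top p -> col_top q -> p = q.
Proof.
move=> pS qS e1 /forall_inP/(_ q qS) + /forall_inP/(_ p pS); rewrite e1 eqxx /= => qp pq.
by apply: pt_inj; rewrite /px /py ?e1 //; lia.
Qed.

Lemma col_bot_inj p q : p \in S -> q \in S -> p.1 = q.1 -> col_bot p -> col_bot q -> p = q.
Proof.
move=> pS qS e1 /forall_inP/(_ q qS) + /forall_inP/(_ p pS); rewrite e1 eqxx /= => pq qp.
by apply: pt_inj; rewrite /px /py ?e1 //; lia.
Qed.

Lemma card_extremal : 0 < r -> #|extremal| < 2 * r ^ 2.
Proof.
move=> r_gt0; pose o := Ordinal r_gt0.
pose f p := (p.1, level_above (py p) (pz p)).
have f_inj : {in extremal &, injective f}.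
  move=> p q; rewrite !inE /f => /andP[pS Ep] /andP[qS Eq] [e1 e_above].
  rewrite -e_above in Eq; case: ifP Ep Eq => _.
    exact: col_top_inj.
  by move=> /andP[_ bp] /andP[_ bq]; apply: col_bot_inj.
(* nothing lies below row 0, so column (o, o) only contributes its top *)
have f_sub : f @: extremal \subset [set~ ((o, o), false)].
  apply/subsetP => _ /imsetP[p + ->]; rewrite !inE /f xpair_eqE => /andP[_].
  case: ifP => [_ _|_ /andP[/exists_inP[q _ /andP[_ qp]] _]]; first by rewrite andbF.
  by apply: contraTN qp => /andP[/eqP e _]; rewrite /py e ltn0.
rewrite -(card_in_imset f_inj); apply: leq_ltn_trans (subset_leq_card f_sub) _.
by rewrite cardsC1 !card_prod card_bool !card_ord; lia.
Qed.

Lemma not_col_top p : ~~ col_top p -> exists2 q, q \in S & q.1 = p.1 /\ pz p < pz q.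
Proof. by case/forall_inPn => q qS; rewrite negb_imply -ltnNge => /andP[/eqP e lt]; exists q. Qed.

Lemma not_col_bot p : ~~ col_bot p -> exists2 q, q \in S & q.1 = p.1 /\ pz q < pz p.
Proof. by case/forall_inPn => q qS; rewrite negb_imply -ltnNge => /andP[/eqP e lt]; exists q. Qed.

Definition nonextremal_level (t : 'I_r) := [set p in S :\: extremal | pz p == t].

Variables L1 L2 : rel (pt r).
Hypothesis L12 : two_realizer (@Cle r) S L1 L2.

Lemma card_nonextremal_row t y : level_above y t || level_below y t ->
  #|[set p in nonextremal_level t | py p == y]| <= 2.
Proof.
move=> y_covered; rewrite leqNgt; apply/negP => row_gt2.
pose a i := enum_val (widen_ord row_gt2 i).
have a_inj : injective a by move=> i j /enum_val_inj/(congr1 val) /= /val_inj.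
have aP i : [/\ a i \in S, a i \notin extremal, py (a i) = y & pz (a i) = t].
  have := enum_valP (widen_ord row_gt2 i).
  by rewrite /nonextremal_level !inE => /andP[/andP[/andP[-> ->] /eqP->] /eqP->].
have a_px i j : i != j -> (px (a i) : nat) != px (a j).
  apply: contraNneq => exy; apply/eqP/a_inj/pt_inj => //.
  - by have [_ _ -> _] := aP i; have [_ _ -> _] := aP j.
  - by have [_ _ _ ->] := aP i; have [_ _ _ ->] := aP j.
have aS i : a i \in S by have [] := aP i.
have a_nE i : ~~ (if level_above y t then col_top (a i) else level_below y t && col_bot (a i)).
  by have [_ + <- <-] := aP i; rewrite inE aS.
have [y_above|y_not_above] := boolP (level_above y t).
- rewrite y_above in a_nE.
  have /exists_inP[b bS /andP[/eqP bt yb]] := y_above.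
  have /fin_all_exists2[c cS ac] i := not_col_top (a_nE i).
  apply: (two_realizer_claw_free L12 bS aS cS); apply: claw_up yb ac.
  + exact: a_px.
  + by move=> i; have [_ _ -> ->] := aP i; rewrite bt.
- rewrite (negbTE y_not_above) /= in y_covered a_nE; rewrite y_covered in a_nE.
  have /exists_inP[b bS /andP[/eqP bt yb]] := y_covered.
  have /fin_all_exists2[c cS ac] i := not_col_bot (a_nE i).
  apply: (two_realizer_claw_free (two_realizer_flip L12) bS aS cS); apply: claw_down yb ac.
  + exact: a_px.
  + by move=> i; have [_ _ -> ->] := aP i; rewrite bt.
Qed.

Lemma card_nonextremal_level t : #|nonextremal_level t| <= r * 2.
Proof.
have inA p : p \in nonextremal_level t -> p \in S /\ pz p = t.
  by rewrite /nonextremal_level !inE => /andP[/andP[_ ->] /eqP].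
case: (boolP [exists p in nonextremal_level t, ~~ (level_above (py p) t || level_below (py p) t)])
  => [/exists_inP[p0 _ lonely]|covered].
- (* all points of level [t] lie in the row of [p0], where they are told apart by [px] *)
  have A_row p : p \in nonextremal_level t -> py p = py p0.
    move=> /inA[pS pt]; apply/val_inj/eqP; apply: contraNT lonely.
    rewrite neq_ltn => /orP[lt|lt]; apply/orP; [right|left];
      by apply/exists_inP; exists p; rewrite // pt eqxx.
  apply: leq_trans (leq_pmulr r (isT : 0 < 2)); rewrite -[X in _ <= X]card_ord.
  apply: (@leq_card_in _ _ (@px r)) => p q pA qA exy.
  by apply: pt_inj; rewrite ?exy ?A_row //; have [_ ->] := inA p pA; have [_ ->] := inA q qA.
- rewrite -[X in X * 2]card_ord; apply: card_le_fibers (@py r) _ _ => y.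
  have [|/set0Pn[p]] := eqVneq [set p in nonextremal_level t | py p == y] set0.
    by move->; rewrite cards0.
  rewrite inE => /andP[pA /eqP<-]; apply: card_nonextremal_row.
  by move/exists_inPn: covered => /(_ p pA); rewrite negbK.
Qed.

Lemma card_nonextremal : #|S :\: extremal| <= 2 * r ^ 2.
Proof.
have -> : 2 * r ^ 2 = #|'I_r| * (r * 2) by rewrite card_ord; lia.
exact: card_le_fibers (@pz r) _ card_nonextremal_level.
Qed.
End Counting.

Theorem mainTheorem2 (r : nat) (hr : 1 <= r) (S : {set pt r}) :
  4 * r ^ 2 <= #|S| -> dim_ge (@Cle r) S 3.
Proof.
move=> S_large d Ls d_lt3 Ls_realizer.
have [L1 [L2 L12]] :=
  realizer_two_realizer d_lt3 (in1W (@Cle_refl r)) (in2W (@Cle_anti r)) Ls_realizer.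
have extremal_sub : extremal S \subset S by apply/subsetP => p; rewrite inE => /andP[].
have := cardsID (extremal S) S; rewrite (setIidPr extremal_sub) => card_S.
have := card_extremal S hr; have := card_nonextremal L12; lia.
Qed.
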